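(* Let $0<\alpha\le\beta$ with $\alpha\le1$, and let $\gamma:[0,1]\to\mathbb{R}^n$ be an $(\alpha,\beta)$-bi-Hölder curve with constant $1\le C_\gamma<\infty$. Then there exists $C=C(\alpha,C_\gamma,n)>0$ such that for all $0<r<1$, $$\Lambda(B(\widehat\gamma,r),r)\le C\, r^{\frac{\alpha-1}{\alpha}}.$$
   Context: A map $\gamma:[0,1]\to\mathbb{R}^n$ is an $(\alpha,\beta)$-bi-Hölder curve with constant $C_\gamma\ge1$ if $\frac1{C_\gamma}|x-y|^\beta\le|\gamma(x)-\gamma(y)|\le C_\gamma|x-y|^\alpha$ for all $x,y\in[0,1]$. $\widehat\gamma:=\gamma([0,1])$. For $A\subset\mathbb{R}^n$, $B(A,r):=\{x:\mathrm{dist}(x,A)\le r\}$. A rectifiable curve is the image of a Lipschitz map $[0,1]\to\mathbb{R}^n$. $\Lambda(E,r):=\inf\{\mathcal{H}^1(\Gamma):\Gamma \text{ a rectifiable curve with } B(\Gamma,r)\supset E\}$. *)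

From HB Require Import structures.
From mathcomp Require Import all_boot all_order all_algebra.
From mathcomp Require Import all_classical all_reals all_analysis.
Set Implicit Arguments. Unset Strict Implicit. Unset Printing Implicit Defensive.
Import Order.TTheory GRing.Theory Num.Theory.
Local Open Scope classical_set_scope.
Local Open Scope ring_scope.

Section Defs.
Variables (R : realType) (n : nat).
Local Notation V := 'rV[R]_n.

Definition edist (x y : V) : R := Num.sqrt (\sum_(i < n) (x ord0 i - y ord0 i) ^+ 2).

Definition bi_holder (alpha beta C : R) (gamma : R -> V) : Prop :=
  forall x y, x \in `[0, 1] -> y \in `[0, 1] ->
    C^-1 * `|x - y| `^ beta <= edist (gamma x) (gamma y) /\
    edist (gamma x) (gamma y) <= C * `|x - y| `^ alpha.

Definition curve_image (gamma : R -> V) : set V := gamma @` `[0, 1].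

(* B(A,r) = {x : dist(x,A) <= r}, dist(x,A) = inf_{a in A} |x-a| *)
Definition cl_nbhd (A : set V) (r : R) : set V :=
  [set x | forall e : R, 0 < e -> exists2 a, A a & edist x a < r + e].

Definition rectifiable_curve (G : set V) : Prop :=
  exists f : R -> V, (exists L : R, forall s t, s \in `[0, 1] -> t \in `[0, 1] ->
      edist (f s) (f t) <= L * `|s - t|) /\ G = f @` `[0, 1].

(* diameter (in \bar R), diam of the empty set is 0 *)
Definition ediam (U : set V) : \bar R :=
  ereal_sup ([set 0%E] `|` [set (edist x y)%:E | x in U & y in U]).

Definition H1_delta (delta : R) (E : set V) : \bar R :=
  ereal_inf [set (\sum_(0 <= k <oo) ediam (U k))%E |
             U in [set U : nat -> set V |
                   E `<=` \bigcup_k U k /\ forall k, (ediam (U k) <= delta%:E)%E]].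

(* 1-dimensional Hausdorff measure H^1 = lim_{delta->0} H1_delta = sup_{delta>0} *)
Definition H1 (E : set V) : \bar R :=
  ereal_sup [set H1_delta delta E | delta in [set d : R | 0 < d]].

Definition Lambda (E : set V) (r : R) : \bar R :=
  ereal_inf [set H1 G | G in [set G | rectifiable_curve G /\ E `<=` cl_nbhd G r]].

End Defs.

From Pilot Require Import Defs.
(** Choose [N ~ (C_gamma / r)^(1/alpha)] sample times [i / N]; by Hoelder
    continuity consecutive samples [gamma (i / N)] are within [r] of each other
    and every point of the curve is within [r] of a sample.  Around each sample
    lay a grid of mesh [r / (n + 1)] on the cube of half-side [3 r]: its
    [O_n(1)] points are [r]-dense in that cube, which contains the part of
    [B(gamma, r)] near the sample.  The polygonal path through all grid points,
    sample after sample, has [O_n(N)] segments of length [O_n(r)], so its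
    length is [O(r N) = O(r^((alpha - 1) / alpha))]. *)
From mathcomp Require Import all_boot all_order all_algebra.
From mathcomp Require Import all_classical all_reals all_analysis.
From mathcomp Require Import ring lra zify.
Set Implicit Arguments. Unset Strict Implicit. Unset Printing Implicit Defensive.
Import Order.TTheory GRing.Theory Num.Theory.
Local Open Scope classical_set_scope.
Local Open Scope ring_scope.

Section Euclid.
Variables (R : realType) (n : nat).
Local Notation V := 'rV[R]_n.
Local Notation edist := (@Defs.edist R n).

Lemma edist_coord_le (x y : V) c : `|x ord0 c - y ord0 c| <= edist x y.
Proof.
rewrite /edist -sqrtr_sqr ler_sqrt; last by apply: sumr_ge0 => i _; exact: sqr_ge0.
rewrite (bigD1 c) //= lerDl; apply: sumr_ge0 => i _; exact: sqr_ge0.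
Qed.

Lemma edist_le_sum_coord (x y : V) : edist x y <= \sum_c `|x ord0 c - y ord0 c|.
Proof.
set S := \sum_c _.
have [S0 H] : 0 <= S /\ \sum_(i < n) (x ord0 i - y ord0 i) ^+ 2 <= S ^+ 2.
  rewrite /S; apply: (big_rec2 (fun a b => 0 <= b /\ a <= b ^+ 2)).
    by split => //; rewrite expr0n.
  move=> i a b _ [b0 ab]; split; first by rewrite addr_ge0.
  rewrite -real_normK ?num_real //.
  have := normr_ge0 (x ord0 i - y ord0 i); set u := `|_|.
  move=> u0; nra.
rewrite /edist -(ger0_norm S0) -sqrtr_sqr ler_sqrt //; exact: sqr_ge0.
Qed.

Lemma edist_le_coord_bound (x y : V) (b : R) :
  (forall c, `|x ord0 c - y ord0 c| <= b) -> edist x y <= n%:R * b.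
Proof.
move=> hb; apply: le_trans (edist_le_sum_coord x y) _.
apply: le_trans (_ : \sum_(c < n) b <= _); first by apply: ler_sum => c _.
by rewrite sumr_const card_ord mulr_natl.
Qed.

End Euclid.

(** Sums of shifted ramps [ramp (M t - k)] parametrise polygonal paths; they
    telescope to a [clamp], whence the Lipschitz bound. *)
Section Ramp.
Variable R : realType.

Definition ramp (x : R) : R := if x <= 0 then 0 else if x <= 1 then x else 1.

Definition clamp (M x : R) : R := if x <= 0 then 0 else if x <= M then x else M.

Ltac case_ifs := repeat (case: ifPn => //; rewrite -?ltNge => ?); lra.

Lemma ramp_le0 x : x <= 0 -> ramp x = 0.
Proof. by move=> x0; rewrite /ramp x0. Qed.

Lemma ramp_ge1 x : 1 <= x -> ramp x = 1.
Proof. move=> x1; rewrite /ramp; case_ifs. Qed.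

Lemma ramp_nondecreasing : {homo ramp : x y / x <= y}.
Proof. move=> x y xy; rewrite /ramp; case_ifs. Qed.

Lemma sum_ramp (M : nat) x : \sum_(0 <= k < M) ramp (x - k%:R) = clamp M%:R x.
Proof.
elim: M => [|M IH]; first by rewrite big_nil /clamp; case_ifs.
rewrite big_nat_recr //= IH /clamp /ramp -natr1.
have := ler0n R M; case_ifs.
Qed.

Lemma clamp_lipschitz (M a b : R) : 0 <= M -> a <= b -> clamp M b - clamp M a <= b - a.
Proof. move=> M0 ab; rewrite /clamp; case_ifs. Qed.

Lemma sum_dist_ramp_le (M : nat) a b :
  \sum_(0 <= k < M) `|ramp (a - k%:R) - ramp (b - k%:R)| <= `|a - b|.
Proof.
wlog ab : a b / a <= b.
  move=> W; have [ab|ba] := leP a b; first exact: W.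
  have := W b a (ltW ba); rewrite (distrC b a).
  by under eq_bigr do rewrite distrC.
rewrite (distrC a) ger0_norm ?subr_ge0 //.
under eq_bigr do rewrite distrC ger0_norm ?subr_ge0 ?ramp_nondecreasing ?lerD2r //.
by rewrite sumrB !sum_ramp; apply: clamp_lipschitz.
Qed.

End Ramp.

Section Polyline.
Variables (R : realType) (n : nat).
Local Notation V := 'rV[R]_n.
Local Notation edist := (@Defs.edist R n).

Definition polyline (M : nat) (P : nat -> V) (t : R) : V :=
  \row_c (P 0%N ord0 c +
          \sum_(0 <= k < M) ramp (M%:R * t - k%:R) * (P k.+1 ord0 c - P k ord0 c)).

Lemma polyline_node M P j :
  (0 < M)%N -> (j <= M)%N -> polyline M P (j%:R / M%:R) = P j.
Proof.
move=> M0 jM; apply/rowP => c; rewrite mxE mulrC divfK ?pnatr_eq0 -?lt0n //.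
rewrite (big_cat_nat (leq0n j) jM) /= [X in _ + (_ + X)]big1_seq; last first.
  move=> k /andP[_]; rewrite mem_index_iota => /andP[jk _].
  by rewrite ramp_le0 ?mul0r // subr_le0 ler_nat.
rewrite addr0 big_nat_cond (eq_bigr (fun k => P k.+1 ord0 c - P k ord0 c)); last first.
  move=> k; rewrite andbT => /andP[_ kj].
  by rewrite ramp_ge1 ?mul1r // lerBrDr addrC natr1 ler_nat.
by rewrite -big_nat_cond (telescope_sumr (fun k => P k ord0 c)) // addrC subrK.
Qed.

Lemma polyline_lipschitz M (P : nat -> V) (D : R) : 0 <= D ->
  (forall k c, (k < M)%N -> `|P k.+1 ord0 c - P k ord0 c| <= D) ->
  forall s t, edist (polyline M P s) (polyline M P t) <= n%:R * D * M%:R * `|s - t|.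
Proof.
move=> D0 HD s t; rewrite -!mulrA; apply: edist_le_coord_bound => c.
rewrite !mxE opprD addrACA subrr add0r -sumrB.
under eq_bigr do rewrite -mulrBl.
apply: le_trans (ler_norm_sum _ _ _) _.
apply: le_trans (_ : \sum_(0 <= k < M)
    `|ramp (M%:R * s - k%:R) - ramp (M%:R * t - k%:R)| * D <= _).
  rewrite big_nat_cond [X in _ <= X]big_nat_cond.
  apply: ler_sum => k; rewrite andbT => /andP[_ kM].
  by rewrite normrM ler_wpM2l // HD.
rewrite -mulr_suml mulrC ler_wpM2l //.
apply: le_trans (sum_dist_ramp_le _ _ _) _.
by rewrite -mulrBr normrM ger0_norm.
Qed.

End Polyline.

Section Length.
Variables (R : realType) (n : nat).
Local Notation V := 'rV[R]_n.
Local Notation edist := (@Defs.edist R n).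

Lemma ediam_le (U : set V) (b : R) : 0 <= b ->
  (forall x y, U x -> U y -> edist x y <= b) -> (ediam U <= b%:E)%E.
Proof.
move=> b0 H; apply: ge_ereal_sup => z [->|[x Ux [y Uy <-]]].
  by rewrite lee_fin.
by rewrite lee_fin H.
Qed.

Lemma unit_interval_grid (K : nat) (t : R) : (0 < K)%N -> t \in `[0, 1] ->
  exists2 k, (k <= K)%N & k%:R / K%:R <= t <= k%:R / K%:R + K%:R^-1.
Proof.
rewrite in_itv /= -(ltr0n R) => K0 /andP[t0 t1].
have tK0 : 0 <= t * K%:R by rewrite mulr_ge0.
exists (Num.truncn (t * K%:R)).
  rewrite truncn_le_nat; apply: (@le_lt_trans _ _ K%:R); last by rewrite ltr_nat.
  by rewrite ler_piMl.
rewrite ler_pdivrMr // truncn_le tK0 /= -[X in _ + X]mul1r -mulrDl.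
by rewrite ler_pdivlMr // natr1; apply/ltW/truncnS_gt.
Qed.

Section LipschitzImage.
Variables (f : R -> V) (L : R).
Hypothesis L0 : 0 <= L.
Hypothesis f_lip : forall s t, s \in `[0, 1] -> t \in `[0, 1] ->
  edist (f s) (f t) <= L * `|s - t|.

Lemma ediam_image_itv_le (a h : R) : 0 <= h ->
  (ediam (f @` (`[a, (a + h)%R] `&` `[0%R, 1%R])) <= (L * h)%:E)%E.
Proof.
move=> h0; apply: ediam_le; first exact: mulr_ge0.
move=> _ _ [s [sa s01] <-] [t [ta t01] <-].
apply: le_trans (f_lip s01 t01) _; rewrite ler_wpM2l //.
move: sa ta; rewrite /= !in_itv /= => /andP[s1 s2] /andP[t1 t2].
rewrite ler_norml; apply/andP; split; lra.
Qed.

(** Cover the image by the images of the [K + 1] intervals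
    [[k / K, (k + 1) / K]], with [K] so large that [L / K <= delta]. *)
Lemma H1_delta_image_le_lipschitz (delta : R) : 0 < delta ->
  (H1_delta delta (f @` `[0%R, 1%R]) <= (2 * L)%:E)%E.
Proof.
move=> d0; set K := (Num.truncn (L / delta)).+1.
have K0 : 0 < K%:R :> R by rewrite ltr0n.
have LK : L / K%:R <= delta.
  by rewrite ler_pdivrMr // mulrC -ler_pdivrMr //; apply/ltW/truncnS_gt.
pose U k : set V := if (k <= K)%N then
  f @` (`[k%:R / K%:R, k%:R / K%:R + K%:R^-1] `&` `[0, 1]) else set0.
pose v k : \bar R := if (k <= K)%N then (L / K%:R)%:E else 0%E.
have dU k : (ediam (U k) <= v k)%E.
  rewrite /U /v; case: ifP => _; last by apply: ediam_le => // x y [].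
  by apply: ediam_image_itv_le; rewrite invr_ge0 ltW.
apply: (@le_trans _ _ (\sum_(0 <= k <oo) ediam (U k))%E).
  apply: ereal_inf_lbound; exists U => //; split.
    move=> _ [t t01 <-]; have [k kK tk] := @unit_interval_grid K t (ltn0Sn _) t01.
    by exists k => //; rewrite /U kK; exists t => //; rewrite /= in_itv /= tk.
  move=> k; apply: le_trans (dU k) _; rewrite /v; case: ifP => _.
    by rewrite lee_fin.
  by rewrite lee_fin (le_trans _ LK) // divr_ge0 // ltW.
apply: (@le_trans _ _ (\sum_(0 <= k <oo) v k)%E).
  apply: lee_nneseries => [k _ _|k _]; last exact: dU.
  by apply: le_ereal_sup_tmp; exists 0%E => //; left.
rewrite (@nneseries_split _ _ 0 K.+1); last first.
  by move=> k _; rewrite /v; case: ifP => _; rewrite ?lee_fin // divr_ge0 // ltW.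
rewrite add0n eseries0 ?adde0; last by move=> i Ki _; rewrite /v leqNgt Ki.
rewrite big_nat_cond (eq_bigr (fun=> (L / K%:R)%:E)); last first.
  by move=> i; rewrite andbT => /andP[_ iK]; rewrite /v ifT.
rewrite -big_nat_cond sumEFin sumr_const_nat subn0 lee_fin.
rewrite -[_ *+ K.+1]mulr_natr mulrAC ler_pdivrMr // -natr1.
have K1 : 1 <= K%:R :> R by rewrite ler1n.
have := ler_wpM2l L0 K1; rewrite mulr1; nra.
Qed.

Lemma H1_image_le_lipschitz : (H1 (f @` `[0%R, 1%R]) <= (2 * L)%:E)%E.
Proof.
by apply: ge_ereal_sup => _ [delta d0 <-]; exact: H1_delta_image_le_lipschitz.
Qed.

End LipschitzImage.

Lemma Lambda_le_chain (E : set V) (r : R) (M : nat) (P : nat -> V) (D : R) :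
  (0 < M)%N -> 0 <= D ->
  (forall k c, (k < M)%N -> `|P k.+1 ord0 c - P k ord0 c| <= D) ->
  (forall x, E x -> exists2 j, (j <= M)%N & edist x (P j) <= r) ->
  (Lambda E r <= (2 * (n%:R * D * M%:R))%:E)%E.
Proof.
move=> M0 D0 HD cover; set f := polyline M P.
have L0 : 0 <= n%:R * D * M%:R by rewrite !mulr_ge0.
have f_lip s t : s \in `[0, 1] -> t \in `[0, 1] ->
    edist (f s) (f t) <= n%:R * D * M%:R * `|s - t|.
  by move=> _ _; exact: polyline_lipschitz.
apply: le_trans (H1_image_le_lipschitz L0 f_lip).
apply: ereal_inf_lbound; exists (f @` `[0, 1]) => //; split.
  by exists f; split => //; exists (n%:R * D * M%:R).
move=> x /cover[j jM xPj] e e0; exists (f (j%:R / M%:R)).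
  exists (j%:R / M%:R) => //=; rewrite in_itv /= divr_ge0 //=.
  by rewrite ler_pdivrMr ?ltr0n // mul1r ler_nat.
by rewrite /f polyline_node //; apply: le_lt_trans xPj _; rewrite ltrDl.
Qed.

End Length.

Lemma divn_succ_bounds K j : (0 < K)%N -> (j %/ K <= j.+1 %/ K <= (j %/ K).+1)%N.
Proof. by move=> K0; rewrite divnS //; case: (_ %| _)%N => /=; lia. Qed.

Section Sampling.
Variables (R : realType) (N : nat).
Hypothesis N0 : (0 < N)%N.

Definition sample_time (i : nat) : R := (minn i N)%:R / N%:R.

Let N0r : 0 < N%:R :> R. Proof. by rewrite ltr0n. Qed.

Lemma sample_time_itv i : sample_time i \in `[0, 1].
Proof.
rewrite in_itv /= divr_ge0 //=.
by rewrite ler_pdivrMr // mul1r ler_nat geq_minr.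
Qed.

Lemma sample_time_step i i' : (i <= i' <= i.+1)%N ->
  `|sample_time i' - sample_time i| <= N%:R^-1.
Proof.
move=> ii'; have /andP[h1 h2] : (minn i N <= minn i' N <= (minn i N).+1)%N by lia.
have Ninv0 : 0 <= N%:R^-1 :> R by rewrite invr_ge0 ltW.
rewrite /sample_time -mulrBl normrM [`|N%:R^-1|]ger0_norm // ler_piMl //.
move: h1 h2; rewrite -!(ler_nat R) -natr1 => h1 h2.
rewrite ler_norml; apply/andP; split; lra.
Qed.

Lemma sample_time_near t : t \in `[0, 1] ->
  exists2 i, (i <= N)%N & `|t - sample_time i| <= N%:R^-1.
Proof.
move=> /(unit_interval_grid N0)[i iN /andP[t1 t2]]; exists i => //.
rewrite /sample_time (minn_idPl iN) ler_norml; apply/andP; split; lra.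
Qed.

End Sampling.
Arguments sample_time {R}.

Lemma grid_round (R : realType) (n m : nat) (s : R) (u : 'I_n -> R) : 0 < s ->
  (forall c, 0 <= u c < m.+1%:R * s) ->
  exists g : {ffun 'I_n -> 'I_m.+1}, forall c, `|u c - (g c)%:R * s| <= s.
Proof.
move=> s0 hu; exists [ffun c => inord (Num.truncn (u c / s))] => c.
have /andP[u0 um] := hu c.
have us0 : 0 <= u c / s by rewrite divr_ge0 // ltW.
rewrite ffunE inordK; last by rewrite ltnS truncn_le_nat ltr_pdivrMr.
have l1 : (Num.truncn (u c / s))%:R * s <= u c.
  by rewrite -ler_pdivlMr // truncn_le us0.
have l2 : u c < (Num.truncn (u c / s)).+1%:R * s by rewrite -ltr_pdivrMr // truncnS_gt.
move: l2; rewrite -natr1 mulrDl mul1r => l2.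
rewrite ler_norml; apply/andP; split; lra.
Qed.

Section NeighbourhoodChain.
Variables (R : realType) (n : nat) (gamma : R -> 'rV[R]_n) (r : R) (N : nat).
Local Notation edist := (@Defs.edist R n).
Hypotheses (r0 : 0 < r) (N0 : (0 < N)%N).
Hypothesis mesh : forall t t', t \in `[0, 1] -> t' \in `[0, 1] ->
  `|t - t'| <= N%:R^-1 -> edist (gamma t) (gamma t') <= r.

Let m := (6 * n.+1)%N.
Let s := r / n.+1%:R.
Let G := {ffun 'I_n -> 'I_m.+1}.
Let K := #|G|.
Let y i := gamma (sample_time N i).

Let s0 : 0 < s. Proof. by rewrite divr_gt0 // ltr0n. Qed.
Let sm : s * m%:R = 6 * r.
Proof. by rewrite /s /m natrM mulrCA mulrC divfK ?pnatr_eq0 // mulrC. Qed.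
Let K0 : (0 < K)%N. Proof. by apply/card_gt0P; exists [ffun => ord0]. Qed.

(** The chain visits, for each sample point [y i], a grid of mesh [s] on the
    cube of half-side [3 r] around [y i]; node [i * K + k] is its [k]-th point. *)
Let node (j : nat) : 'rV[R]_n := \row_c (y (j %/ K) ord0 c - 3 * r +
  s * (nth [ffun => ord0] (enum G) (j %% K)%N c : nat)%:R).

Let node_step k c : `|node k.+1 ord0 c - node k ord0 c| <= 7 * r.
Proof.
rewrite !mxE.
set i := (k %/ K)%N; set i' := (k.+1 %/ K)%N.
set g' := nth _ _ (k.+1 %% K)%N; set g := nth _ _ (k %% K)%N.
have hy : `|y i' ord0 c - y i ord0 c| <= r.
  apply: le_trans (edist_coord_le _ _ c) _; apply: mesh; rewrite ?sample_time_itv //.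
  exact/sample_time_step/divn_succ_bounds.
have hg : `|s * (g' c : nat)%:R - s * (g c : nat)%:R| <= 6 * r.
  rewrite -sm -mulrBr normrM [`|s|]ger0_norm ?(ltW s0) // ler_wpM2l ?(ltW s0) //.
  have := ltn_ord (g' c); have := ltn_ord (g c).
  rewrite !ltnS -!(ler_nat R) => l1 l2.
  have := ler0n R (g' c); have := ler0n R (g c) => z1 z2.
  rewrite ler_norml; apply/andP; split; lra.
move: hy hg; rewrite !ler_norml => /andP[? ?] /andP[? ?].
apply/andP; split; lra.
Qed.

Let node_cover x : cl_nbhd (curve_image gamma) r x ->
  exists2 j, (j <= N.+1 * K)%N & edist x (node j) <= r.
Proof.
move=> /(_ r r0)[_ [t t01 <-] hxt].
have [i iN hti] := sample_time_near N0 t01.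
have hty : edist (gamma t) (y i) <= r by apply: mesh; rewrite ?sample_time_itv.
pose u c := x ord0 c - y i ord0 c + 3 * r.
have hu c : 0 <= u c < m.+1%:R * s.
  have := le_trans (edist_coord_le (gamma t) (y i) c) hty.
  have := le_lt_trans (edist_coord_le x (gamma t) c) hxt.
  rewrite -[m.+1%:R]natr1 mulrDl mul1r mulrC sm /u.
  rewrite ltr_norml ler_norml => /andP[? ?] /andP[? ?]; apply/andP; split; have := s0; lra.
have [g hg] := grid_round s0 hu.
have gK : (index g (enum G) < K)%N by rewrite /K cardE index_mem mem_enum.
exists (i * K + index g (enum G))%N.
  apply: leq_trans (_ : (i.+1 * K <= _)%N); last by rewrite leq_mul2r ltnS iN orbT.
  by rewrite mulSn addnC leq_add2r ltnW.
apply: le_trans (_ : n%:R * s <= r); last first.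
  by rewrite /s mulrCA ger_pMr // ler_pdivrMr ?ltr0n // mul1r ler_nat.
apply: edist_le_coord_bound => c.
rewrite mxE divnMDl // divn_small // addn0 modnMDl modn_small //.
rewrite nth_index ?mem_enum //.
have -> : x ord0 c - (y i ord0 c - 3 * r + s * (g c : nat)%:R) =
  u c - (g c : nat)%:R * s by rewrite /u; ring.
exact: hg.
Qed.

Lemma Lambda_nbhd_curve_le : (Lambda (cl_nbhd (curve_image gamma) r) r <=
  (14 * n%:R * r * (N.+1 * (6 * n.+1).+1 ^ n)%:R)%:E)%E.
Proof.
have -> : ((6 * n.+1).+1 ^ n)%N = K by rewrite /K card_ffun !card_ord.
have -> : 14 * n%:R * r * (N.+1 * K)%:R = 2 * (n%:R * (7 * r) * (N.+1 * K)%:R).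
  by ring.
apply: Lambda_le_chain node_cover.
- by rewrite muln_gt0.
- by rewrite mulr_ge0 // ltW.
- by move=> k c _; exact: node_step.
Qed.

End NeighbourhoodChain.

Lemma bi_holder_mesh (R : realType) (n : nat) (alpha beta Cg r : R)
    (gamma : R -> 'rV[R]_n) (N : nat) :
  0 < alpha -> 0 < Cg -> 0 < r -> bi_holder alpha beta Cg gamma ->
  (Cg / r) `^ alpha^-1 <= N%:R ->
  forall t t', t \in `[0, 1] -> t' \in `[0, 1] -> `|t - t'| <= N%:R^-1 ->
    Defs.edist (gamma t) (gamma t') <= r.
Proof.
move=> a0 Cg0 r0 hol AN t t' t01 t'01 tt'.
have N0 : 0 < N%:R :> R.
  by apply: lt_le_trans AN; rewrite powR_gt0 // divr_gt0.
apply: le_trans (proj2 (hol _ _ t01 t'01)) _.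
have h1 : `|t - t'| `^ alpha <= (N%:R `^ alpha)^-1.
  rewrite -powRN -[- alpha]mulN1r powRrM powR_inv1 ?ler0n //.
  by apply: ge0_ler_powR; rewrite ?nnegrE ?invr_ge0 ?(ltW a0) ?(ltW N0).
have h2 : Cg / r <= N%:R `^ alpha.
  have -> : Cg / r = ((Cg / r) `^ alpha^-1) `^ alpha.
    by rewrite -powRrM mulVf ?lt0r_neq0 // powRr1 // divr_ge0 // ltW.
  by apply: ge0_ler_powR; rewrite ?nnegrE ?powR_ge0 ?(ltW a0) ?(ltW N0).
have Na0 : 0 < N%:R `^ alpha by rewrite powR_gt0.
apply: le_trans (ler_wpM2l (ltW Cg0) h1) _.
by rewrite ler_pdivrMr // mulrC -ler_pdivrMr.
Qed.

Lemma mul_powR_div (R : realType) (a c r : R) : 0 < a -> 0 <= c -> 0 < r ->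
  r * (c / r) `^ a^-1 = c `^ a^-1 * r `^ ((a - 1) / a).
Proof.
move=> a0 c0 r0.
rewrite powRM ?invr_ge0 ?(ltW r0) // -[r^-1]powR_inv1 ?(ltW r0) // -powRrM mulrCA.
congr (_ * _).
rewrite -[X in X * _](powRr1 (ltW r0)) -powRD; last by rewrite lt0r_neq0 // implybT.
by congr (_ `^ _); rewrite mulN1r mulrBl mulfV ?lt0r_neq0 // div1r.
Qed.

Theorem lemma3p10 (R : realType) (n : nat) (alpha Cg : R) :
  0 < alpha -> alpha <= 1 -> 1 <= Cg ->
  exists C : R, 0 < C /\
    forall (beta : R) (gamma : R -> 'rV[R]_n),
      alpha <= beta -> bi_holder alpha beta Cg gamma ->
      forall r : R, 0 < r -> r < 1 ->
        (Lambda (cl_nbhd (curve_image gamma) r) r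
          <= (C * r `^ ((alpha - 1) / alpha))%:E)%E.
Proof.
move=> a0 _ C1; set K := ((6 * n.+1).+1 ^ n)%N.
have Cg0 : 0 < Cg by apply: lt_le_trans C1.
exists (42 * n.+1%:R * K%:R * Cg `^ alpha^-1); split.
  by rewrite !mulr_gt0 ?ltr0n ?expn_gt0 ?powR_gt0.
move=> beta gamma _ hol r r0 r1.
set A := (Cg / r) `^ alpha^-1.
have A1 : 1 <= A.
  have Cr : 1 <= Cg / r by rewrite ler_pdivlMr // mul1r; lra.
  have ai0 : 0 <= alpha^-1 by rewrite invr_ge0 ltW.
  have := @ge0_ler_powR R _ ai0 1 (Cg / r); rewrite powR1.
  by apply; rewrite // nnegrE; lra.
set N := (Num.truncn A).+1.
have AN : A <= N%:R by apply/ltW/truncnS_gt.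
have NA : N%:R <= A + 1 by rewrite -natr1 lerD2r truncn_le; lra.
apply: le_trans (Lambda_nbhd_curve_le r0 (ltn0Sn _) (bi_holder_mesh a0 Cg0 r0 hol AN)) _.
rewrite -/K lee_fin -[X in _ <= X]mulrA -mul_powR_div ?(ltW Cg0) // -/A.
have NK : (N.+1 * K)%:R <= 3 * A * K%:R by rewrite natrM -natr1 ler_wpM2r //; lra.
rewrite [X in _ <= X](_ : _ = 14 * n.+1%:R * r * (3 * A * K%:R)); last by ring.
apply: ler_pM; rewrite ?mulr_ge0 ?ler_wpM2l ?ler_nat ?(ltW r0) //.
by rewrite ler_wpM2r ?(ltW r0) // ler_wpM2l // ler_nat.
Qed.
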